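(* For any integers $p\geq3$ and $k\geq1$, $\lambda^{(1)}(p,k)=\lambda^{(2)}(p,k)$ if and only if $p\leq k$.
   Context: $\lambda^{(1)}(p,k)=0$ if $k\in\{1,2\}$ and $\lambda^{(1)}(p,k)=\sqrt{p\frac{(k-1)^{k-1}}{(k-2)^{k-2}}}$ if $k>2$. For $\lambda>0$: $m_\lambda=\min\left\{1,\left(\frac{(p-2)\sqrt p}{\lambda\sqrt{p-1}}\right)^{1/k}\right\}$; $m_*(\lambda)$ is the largest solution $m\in(0,1]$ of $\frac{\lambda m^k}{\sqrt p}=\frac{m^2}{\sqrt{1-m^2}}$; and $\lambda^{(2)}(p,k)=\inf\{\lambda\geq\lambda^{(1)}(p,k): m_*(\lambda)\geq m_\lambda\}$. *)

From Stdlib Require Import Reals.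
Open Scope R_scope.

Definition lambda1 (p k : nat) : R :=
  if (k <=? 2)%nat then 0
  else sqrt (INR p * (INR (k - 1) ^ (k - 1) / INR (k - 2) ^ (k - 2))).

Definition m_lam (p k : nat) (lam : R) : R :=
  Rmin 1 (Rpower ((INR p - 2) * sqrt (INR p) / (lam * sqrt (INR p - 1)))
                 (1 / INR k)).

Definition mstar_sol (p k : nat) (lam m : R) : Prop :=
  0 < m <= 1 /\ lam * m ^ k / sqrt (INR p) = m ^ 2 / sqrt (1 - m ^ 2).

Definition is_mstar (p k : nat) (lam m : R) : Prop :=
  mstar_sol p k lam m /\ forall m', mstar_sol p k lam m' -> m' <= m.

(* the set whose infimum is lambda^(2)(p,k) *)
Definition lambda2_set (p k : nat) (lam : R) : Prop :=
  lambda1 p k <= lam /\ 0 < lam /\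
  exists m, is_mstar p k lam m /\ m_lam p k lam <= m.

Definition is_glb (E : R -> Prop) (x : R) : Prop :=
  (forall y, E y -> x <= y) /\ (forall z, (forall y, E y -> z <= y) -> z <= x).

From Stdlib Require Import Reals Lra Lia.
Open Scope R_scope.

(* Write s = m^2. For k = j + 2 the equation defining m_*(lambda) reads
   lambda^2 s^j (1 - s) = p, and, under it, m_lambda <= m becomes
   s >= (p - 2)/(p - 1). The hump s^j (1 - s) peaks at s = j/(j + 1), where
   lambda = lambda^(1). Both critical values have the form x/(x + 1), so they
   compare as j and p - 2, i.e. as k and p.
   If p <= k, the peak lies above the threshold and lambda^(1) belongs to the
   set (its largest solution is the peak), so it is the minimum.
   If p > k, admissible s lie beyond the threshold, past the peak, where the
   hump decreases; hence every lambda in the set is at least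
   sqrt (p / hump (threshold)) > lambda^(1). For k <= 2, where lambda^(1) = 0,
   a positive lower bound suffices. *)

Definition hump (j : nat) (t : R) : R := t ^ j * (1 - t).

Definition succ_ratio (x : R) : R := x / (x + 1).

Lemma succ_ratio_compl x : 0 <= x -> 1 - succ_ratio x = / (x + 1).
Proof. intro Hx. unfold succ_ratio. field. lra. Qed.

Lemma succ_ratio_nonneg x : 0 <= x -> 0 <= succ_ratio x.
Proof. intro Hx. apply Rle_mult_inv_pos; lra. Qed.

Lemma succ_ratio_lt_1 x : 0 <= x -> succ_ratio x < 1.
Proof.
  intro Hx. pose proof (succ_ratio_compl x Hx).
  assert (0 < / (x + 1)) by (apply Rinv_0_lt_compat; lra). lra.
Qed.

Lemma succ_ratio_pos_lt_1 x : 0 < x -> 0 < succ_ratio x < 1.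
Proof. intro Hx. split; [apply Rdiv_lt_0_compat | apply succ_ratio_lt_1]; lra. Qed.

Lemma succ_ratio_lt a b : 0 <= a -> a < b -> succ_ratio a < succ_ratio b.
Proof.
  intros Ha Hab.
  pose proof (succ_ratio_compl a Ha). pose proof (succ_ratio_compl b ltac:(lra)).
  assert (/ (b + 1) < / (a + 1)) by (apply Rinv_lt_contravar; nra). lra.
Qed.

Lemma succ_ratio_le a b : 0 <= a -> a <= b -> succ_ratio a <= succ_ratio b.
Proof.
  intros Ha [Hab | <-]; [left; apply succ_ratio_lt |]; lra.
Qed.

Lemma succ_ratio_div_sqrt_compl x : 0 <= x ->
  succ_ratio x / sqrt (1 - succ_ratio x) = x / sqrt (x + 1).
Proof.
  intro Hx. rewrite succ_ratio_compl, sqrt_inv by lra. unfold succ_ratio.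
  assert (Hq : 0 < sqrt (x + 1)) by (apply sqrt_lt_R0; lra).
  rewrite <- (sqrt_sqrt (x + 1)) at 1 by lra. field. lra.
Qed.

Lemma div_sqrt_compl_lt a b : 0 <= a -> a < b -> b < 1 ->
  a / sqrt (1 - a) < b / sqrt (1 - b).
Proof.
  intros Ha Hab Hb.
  assert (Hsb : 0 < sqrt (1 - b)) by (apply sqrt_lt_R0; lra).
  assert (Hsab : sqrt (1 - b) < sqrt (1 - a)) by (apply sqrt_lt_1; lra).
  apply Rle_lt_trans with (a / sqrt (1 - b)).
  - apply Rmult_le_compat_l; [lra |]. apply Rinv_le_contravar; lra.
  - apply Rmult_lt_compat_r; [apply Rinv_0_lt_compat |]; lra.
Qed.

Lemma div_sqrt_compl_le_iff a b : 0 <= a < 1 -> 0 <= b < 1 ->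
  a / sqrt (1 - a) <= b / sqrt (1 - b) <-> a <= b.
Proof.
  intros Ha Hb. split; intro H.
  - destruct (Rle_lt_dec a b) as [|Hba]; [assumption |].
    pose proof (div_sqrt_compl_lt b a ltac:(lra) Hba ltac:(lra)). lra.
  - destruct H as [H | ->]; [left; apply div_sqrt_compl_lt |]; lra.
Qed.

Lemma hump_pos j t : 0 < t < 1 -> 0 < hump j t.
Proof. intro Ht. apply Rmult_lt_0_compat; [apply pow_lt |]; lra. Qed.

Lemma hump_derivative_neg j c : succ_ratio (INR j) < c ->
  INR j * c ^ pred j * (1 - c) - c ^ j < 0.
Proof.
  intro Hc.
  pose proof (succ_ratio_nonneg (INR j) (pos_INR j)) as Hj.
  assert (Hc0 : 0 < c) by lra. clear Hj.
  destruct j as [|n]; [simpl; lra |].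
  rewrite S_INR in *. cbn [pred]. change (c ^ S n) with (c * c ^ n).
  unfold succ_ratio in Hc. pose proof (pos_INR n).
  assert (Hn : INR n + 1 < (INR n + 1 + 1) * c).
  { replace (INR n + 1) with ((INR n + 1) / (INR n + 1 + 1) * (INR n + 1 + 1)) at 1
      by (field; lra).
    rewrite (Rmult_comm _ c). apply Rmult_lt_compat_r; lra. }
  pose proof (pow_lt c n Hc0). nra.
Qed.

Lemma hump_decreasing j a b : succ_ratio (INR j) <= a -> a < b -> b <= 1 ->
  hump j b < hump j a.
Proof.
  intros Ha Hab Hb.
  destruct (MVT_cor2 (hump j)
     (fun c => INR j * c ^ pred j * (1 - c) + c ^ j * (0 - 1)) a b Hab)
    as [c [Hdiff Hc]].
  { intros c _. apply (derivable_pt_lim_mult (fun t => t ^ j) (fun t => 1 - t)).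
    - apply derivable_pt_lim_pow.
    - apply (derivable_pt_lim_minus (fun _ => 1) (fun t => t)).
      + apply derivable_pt_lim_const.
      + apply derivable_pt_lim_id. }
  pose proof (hump_derivative_neg j c ltac:(lra)). nra.
Qed.

Lemma Rmin_le_iff_of_lt a b m : m < b -> Rmin b a <= m <-> a <= m.
Proof.
  intro Hm. apply Rmin_case_strong; intro H; split; intro H'; lra.
Qed.

Lemma Rpower_inv_le_iff x m k : 0 < x -> 0 < m -> (1 <= k)%nat ->
  Rpower x (1 / INR k) <= m <-> x <= m ^ k.
Proof.
  intros Hx Hm Hk.
  assert (Hk0 : 0 < INR k) by (apply lt_0_INR; lia).
  assert (Hroot : forall y, 0 < y -> Rpower y (1 / INR k) ^ k = y).
  { intros y Hy. rewrite <- Rpower_pow by apply exp_pos.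
    rewrite Rpower_mult. replace (1 / INR k * INR k) with 1 by (field; lra).
    apply Rpower_1; exact Hy. }
  split; intro H.
  - rewrite <- (Hroot x Hx). apply pow_incr. split; [left; apply exp_pos | exact H].
  - assert (Hmk : 0 < m ^ k) by (apply pow_lt; exact Hm).
    apply Rle_trans with (Rpower (m ^ k) (1 / INR k)).
    + apply Rle_Rpower_l; [left; apply Rdiv_lt_0_compat |]; lra.
    + rewrite <- Rpower_pow, Rpower_mult by exact Hm.
      replace (INR k * (1 / INR k)) with 1 by (field; lra).
      rewrite Rpower_1 by exact Hm. lra.
Qed.

Lemma eq_iff_pow2_eq a b : 0 <= a -> 0 <= b -> a = b <-> a ^ 2 = b ^ 2.
Proof.
  intros Ha Hb. split; intro H; [now rewrite H |].
  apply Rsqr_inj; [exact Ha | exact Hb |]. rewrite !Rsqr_pow2. exact H.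
Qed.

Lemma mstar_eq_iff p k lam m : (1 <= p)%nat -> 0 < lam -> 0 < m < 1 ->
  lam * m ^ k / sqrt (INR p) = m ^ 2 / sqrt (1 - m ^ 2) <->
  lam ^ 2 * (m ^ 2) ^ k * (1 - m ^ 2) = INR p * (m ^ 2) ^ 2.
Proof.
  intros Hp Hlam Hm.
  assert (HP : 0 < INR p) by (apply lt_0_INR; lia).
  assert (Hu : 0 < 1 - m ^ 2) by nra.
  assert (Hs : 0 < sqrt (INR p)) by (apply sqrt_lt_R0; exact HP).
  assert (Hsu : 0 < sqrt (1 - m ^ 2)) by (apply sqrt_lt_R0; exact Hu).
  assert (Hmk : 0 < m ^ k) by (apply pow_lt; lra).
  rewrite eq_iff_pow2_eq.
  2: { apply Rle_mult_inv_pos; [apply Rmult_le_pos |]; lra. }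
  2: { apply Rle_mult_inv_pos; [apply pow_le |]; lra. }
  assert (HL : (lam * m ^ k / sqrt (INR p)) ^ 2 = lam ^ 2 * (m ^ 2) ^ k / INR p).
  { replace ((m ^ 2) ^ k) with ((m ^ k) ^ 2) by (rewrite <- !pow_mult; f_equal; lia).
    rewrite <- (pow2_sqrt (INR p)) at 2 by lra. field. lra. }
  assert (HR : (m ^ 2 / sqrt (1 - m ^ 2)) ^ 2 = (m ^ 2) ^ 2 / (1 - m ^ 2)).
  { rewrite <- (pow2_sqrt (1 - m ^ 2)) at 2 by lra. field. lra. }
  rewrite HL, HR. split; intro H.
  - replace (lam ^ 2 * (m ^ 2) ^ k * (1 - m ^ 2))
      with (lam ^ 2 * (m ^ 2) ^ k / INR p * (INR p * (1 - m ^ 2))) by (field; lra).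
    rewrite H. field. lra.
  - apply (Rmult_eq_reg_r (INR p * (1 - m ^ 2))); [| nra].
    replace (lam ^ 2 * (m ^ 2) ^ k / INR p * (INR p * (1 - m ^ 2)))
      with (lam ^ 2 * (m ^ 2) ^ k * (1 - m ^ 2)) by (field; lra).
    rewrite H. field. lra.
Qed.

Lemma hump_eq_iff j lam s P : 0 < s ->
  lam ^ 2 * s ^ S (S j) * (1 - s) = P * s ^ 2 <-> lam ^ 2 * hump j s = P.
Proof.
  intro Hs. unfold hump.
  replace (lam ^ 2 * s ^ S (S j) * (1 - s)) with (lam ^ 2 * (s ^ j * (1 - s)) * s ^ 2)
    by (simpl; ring).
  assert (Hs2 : s ^ 2 <> 0) by (apply pow_nonzero; lra).
  split; intro H; [apply (Rmult_eq_reg_r (s ^ 2)) | rewrite H]; auto.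
Qed.

(* At [m = 1] the right-hand side is [1 / sqrt 0 = 0], Rocq's junk value. *)
Lemma mstar_sol_lt_1 p k lam m : (1 <= p)%nat -> 0 < lam -> mstar_sol p k lam m -> m < 1.
Proof.
  intros Hp Hlam [[Hm0 [Hm1 | ->]] Heq]; [exact Hm1 | exfalso].
  rewrite !pow1, Rminus_diag, sqrt_0, Rdiv_0_r, Rmult_1_r in Heq.
  assert (0 < sqrt (INR p)) by (apply sqrt_lt_R0, lt_0_INR; lia).
  assert (0 < lam / sqrt (INR p)) by (apply Rdiv_lt_0_compat; lra).
  lra.
Qed.

Lemma lambda1_peak p j : (1 <= j)%nat ->
  lambda1 p (S (S j)) = sqrt (INR p / hump j (succ_ratio (INR j))).
Proof.
  intro Hj. unfold lambda1, hump, succ_ratio.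
  replace (S (S j) <=? 2)%nat with false by (symmetry; apply Nat.leb_gt; lia).
  replace (S (S j) - 1)%nat with (S j) by lia.
  replace (S (S j) - 2)%nat with j by lia.
  f_equal. rewrite S_INR.
  assert (Hn : 0 < INR j) by (apply lt_0_INR; lia).
  assert (0 < INR j ^ j) by (apply pow_lt; lra).
  assert (0 < (INR j + 1) ^ j) by (apply pow_lt; lra).
  unfold Rdiv. rewrite Rpow_mult_distr, pow_inv. simpl pow at 1.
  field. repeat split; lra.
Qed.

Lemma is_glb_of_min (E : R -> Prop) x : E x -> (forall y, E y -> x <= y) -> is_glb E x.
Proof. intros Ex Hlow. split; [exact Hlow | intros z Hz; exact (Hz x Ex)]. Qed.

Lemma sqrt_div_le a h y : 0 < h -> 0 <= y -> a <= y ^ 2 * h -> sqrt (a / h) <= y.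
Proof.
  intros Hh Hy Ha. rewrite <- (sqrt_pow2 y Hy). apply sqrt_le_1_alt.
  apply (Rmult_le_reg_r h); [exact Hh |]. unfold Rdiv. rewrite Rmult_assoc, Rinv_l by lra. lra.
Qed.

Section Lambda2.

Variable p : nat.
Hypothesis hp : (3 <= p)%nat.

Let INR_p_ge_3 : 3 <= INR p.
Proof. apply (le_INR 3) in hp. simpl in hp. lra. Qed.

Lemma m_lam_le_iff k lam m : (1 <= k)%nat -> 0 < lam -> 0 < m < 1 ->
  lam * m ^ k / sqrt (INR p) = m ^ 2 / sqrt (1 - m ^ 2) ->
  m_lam p k lam <= m <-> succ_ratio (INR p - 2) <= m ^ 2.
Proof.
  intros Hk Hlam Hm Heq.
  assert (Hs : 0 < sqrt (INR p)) by (apply sqrt_lt_R0; lra).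
  assert (Hs1 : 0 < sqrt (INR p - 1)) by (apply sqrt_lt_R0; lra).
  assert (Hsu : 0 < sqrt (1 - m ^ 2)) by (apply sqrt_lt_R0; nra).
  set (c := sqrt (INR p) / lam).
  assert (Hc : 0 < c) by (apply Rdiv_lt_0_compat; lra).
  assert (Hx : (INR p - 2) * sqrt (INR p) / (lam * sqrt (INR p - 1))
               = c * ((INR p - 2) / sqrt (INR p - 1))) by (unfold c; field; lra).
  assert (Hmk : m ^ k = c * (m ^ 2 / sqrt (1 - m ^ 2))).
  { unfold c. rewrite <- Heq. field. lra. }
  assert (Hthr : (INR p - 2) / sqrt (INR p - 1)
                 = succ_ratio (INR p - 2) / sqrt (1 - succ_ratio (INR p - 2))).
  { rewrite succ_ratio_div_sqrt_compl by lra. do 2 f_equal. ring. }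
  unfold m_lam. rewrite Rmin_le_iff_of_lt by lra.
  rewrite Rpower_inv_le_iff; [| | lra | exact Hk].
  2: { rewrite Hx. apply Rmult_lt_0_compat, Rdiv_lt_0_compat; lra. }
  rewrite Hx, Hmk, Hthr, <- (div_sqrt_compl_le_iff (succ_ratio (INR p - 2)) (m ^ 2)).
  - split; intro H; [apply (Rmult_le_reg_l c) | apply Rmult_le_compat_l]; lra.
  - split; [apply succ_ratio_nonneg | apply succ_ratio_lt_1]; lra.
  - nra.
Qed.

Lemma lambda2_set_sol k y : (1 <= k)%nat -> lambda2_set p k y ->
  0 < y /\ exists s, 0 < s < 1 /\ y ^ 2 * s ^ k * (1 - s) = INR p * s ^ 2 /\
                     succ_ratio (INR p - 2) <= s.
Proof.
  intros Hk [_ [Hy [m [[Hsol _] Hmlam]]]].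
  assert (Hm : 0 < m < 1).
  { split; [apply Hsol | apply (mstar_sol_lt_1 p k y m)]; [lia | exact Hy | exact Hsol]. }
  split; [exact Hy | exists (m ^ 2)].
  split; [split; nra |].
  split; [apply mstar_eq_iff | apply (m_lam_le_iff k y m)]; try lia; try lra; apply Hsol.
Qed.

Lemma lambda2_set_ge_1 y : lambda2_set p 1 y -> 1 <= y.
Proof.
  intro Hy. destruct (lambda2_set_sol 1 y (le_n 1) Hy) as [Hy0 [s [Hs [Heq Hthr]]]].
  assert (Hhalf : succ_ratio 1 <= succ_ratio (INR p - 2)) by (apply succ_ratio_le; lra).
  unfold succ_ratio at 1 in Hhalf.
  assert (Heq1 : y ^ 2 * (1 - s) = INR p * s).
  { apply (Rmult_eq_reg_r s); [| lra].
    transitivity (y ^ 2 * s ^ 1 * (1 - s)); [ring | rewrite Heq; ring]. }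
  assert (3 <= y ^ 2) by nra.
  nra.
Qed.

Lemma lambda2_set_ge_hump_bound j y : (S (S j) < p)%nat -> lambda2_set p (S (S j)) y ->
  sqrt (INR p / hump j (succ_ratio (INR p - 2))) <= y.
Proof.
  intros Hjp Hy.
  destruct (lambda2_set_sol (S (S j)) y ltac:(lia) Hy) as [Hy0 [s [Hs [Heq Hs_thr]]]].
  apply lt_INR in Hjp. rewrite !S_INR in Hjp. pose proof (pos_INR j).
  assert (Hpeak : succ_ratio (INR j) <= succ_ratio (INR p - 2))
    by (apply succ_ratio_le; lra).
  assert (Hthr : 0 < succ_ratio (INR p - 2)).
  { pose proof (succ_ratio_nonneg (INR j) (pos_INR j)).
    apply Rle_lt_trans with (succ_ratio (INR j)); [lra | apply succ_ratio_lt; lra]. }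
  apply hump_eq_iff in Heq; [| lra].
  assert (Hhs : hump j s <= hump j (succ_ratio (INR p - 2))).
  { destruct Hs_thr as [Hlt | <-]; [left; apply hump_decreasing |]; lra. }
  apply sqrt_div_le; [apply hump_pos; split; [lra | apply succ_ratio_lt_1; lra] | lra | nra].
Qed.

Lemma lambda1_lt_hump_bound j : (S (S j) < p)%nat ->
  lambda1 p (S (S j)) < sqrt (INR p / hump j (succ_ratio (INR p - 2))).
Proof.
  intro Hjp.
  apply lt_INR in Hjp. rewrite !S_INR in Hjp. pose proof (pos_INR j).
  set (thr := succ_ratio (INR p - 2)).
  assert (Hpeak : succ_ratio (INR j) < thr) by (apply succ_ratio_lt; lra).
  assert (Hthr : 0 < thr < 1).
  { pose proof (succ_ratio_nonneg (INR j) (pos_INR j)).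
    split; [| apply succ_ratio_lt_1]; lra. }
  assert (Hh : 0 < hump j thr) by (apply hump_pos; exact Hthr).
  destruct j as [|j].
  - unfold lambda1; simpl. apply sqrt_lt_R0, Rdiv_lt_0_compat; lra.
  - assert (Hhpeak : 0 < hump (S j) (succ_ratio (INR (S j)))).
    { apply hump_pos, succ_ratio_pos_lt_1, lt_0_INR; lia. }
    assert (Hdec : hump (S j) thr < hump (S j) (succ_ratio (INR (S j))))
      by (apply hump_decreasing; lra).
    rewrite lambda1_peak by lia. apply sqrt_lt_1.
    + left. apply Rdiv_lt_0_compat; lra.
    + left. apply Rdiv_lt_0_compat; lra.
    + apply Rmult_lt_compat_l; [lra |]. apply Rinv_lt_contravar; nra.
Qed.

Lemma lambda2_set_gap k : (1 <= k)%nat -> (k < p)%nat ->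
  exists z, lambda1 p k < z /\ forall y, lambda2_set p k y -> z <= y.
Proof.
  intros Hk Hkp.
  destruct k as [|[|j]]; [lia | |].
  - exists 1. split; [unfold lambda1; simpl; lra | exact lambda2_set_ge_1].
  - exists (sqrt (INR p / hump j (succ_ratio (INR p - 2)))).
    split; [apply lambda1_lt_hump_bound | intro y; apply lambda2_set_ge_hump_bound]; exact Hkp.
Qed.

Lemma lambda1_peak_pos j : (1 <= j)%nat -> 0 < lambda1 p (S (S j)).
Proof.
  intro Hj. rewrite lambda1_peak by exact Hj.
  apply sqrt_lt_R0, Rdiv_lt_0_compat; [lra |].
  apply hump_pos, succ_ratio_pos_lt_1, lt_0_INR; lia.
Qed.

Lemma lambda1_sq_hump_peak j : (1 <= j)%nat ->
  lambda1 p (S (S j)) ^ 2 * hump j (succ_ratio (INR j)) = INR p.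
Proof.
  intro Hj. rewrite lambda1_peak by exact Hj.
  assert (Hh : 0 < hump j (succ_ratio (INR j)))
    by (apply hump_pos, succ_ratio_pos_lt_1, lt_0_INR; lia).
  rewrite pow2_sqrt by (left; apply Rdiv_lt_0_compat; lra). field. lra.
Qed.

Lemma lambda1_is_mstar j : (1 <= j)%nat ->
  is_mstar p (S (S j)) (lambda1 p (S (S j))) (sqrt (succ_ratio (INR j))).
Proof.
  intro Hj.
  pose proof (lambda1_peak_pos j Hj) as HL.
  pose proof (lambda1_sq_hump_peak j Hj) as HL2.
  set (L := lambda1 p (S (S j))) in *.
  set (t := succ_ratio (INR j)) in *.
  assert (Ht : 0 < t < 1) by (apply succ_ratio_pos_lt_1, lt_0_INR; lia).
  assert (Hsol : forall m, 0 < m < 1 ->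
    L * m ^ S (S j) / sqrt (INR p) = m ^ 2 / sqrt (1 - m ^ 2) <->
    L ^ 2 * hump j (m ^ 2) = INR p).
  { intros m Hm. rewrite mstar_eq_iff, hump_eq_iff by (lia || nra). reflexivity. }
  assert (Hm2 : sqrt t ^ 2 = t) by (apply pow2_sqrt; lra).
  assert (Hm : 0 < sqrt t < 1).
  { split; [apply sqrt_lt_R0 | rewrite <- sqrt_1; apply sqrt_lt_1]; lra. }
  split.
  - split; [lra | apply Hsol; [exact Hm | rewrite Hm2; exact HL2]].
  - intros m' Hm'.
    pose proof (mstar_sol_lt_1 p _ _ _ ltac:(lia) HL Hm') as Hm'1.
    destruct Hm' as [[Hm'0 _] Heq'].
    apply Hsol in Heq'; [| lra].
    destruct (Rle_lt_dec m' (sqrt t)) as [| Hlt]; [assumption | exfalso].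
    assert (Hdec : hump j (m' ^ 2) < hump j t) by (apply hump_decreasing; fold t; nra).
    apply (Rmult_lt_compat_l (L ^ 2)) in Hdec; [lra | apply pow_lt; exact HL].
Qed.

Lemma lambda1_mem_lambda2_set k : (3 <= k)%nat -> (p <= k)%nat ->
  lambda2_set p k (lambda1 p k).
Proof.
  intros Hk Hpk.
  destruct k as [|[|j]]; [lia | lia |].
  pose proof (lambda1_peak_pos j ltac:(lia)) as HL.
  pose proof (lambda1_is_mstar j ltac:(lia)) as Hmstar.
  split; [apply Rle_refl | split; [exact HL | exists (sqrt (succ_ratio (INR j)))]].
  split; [exact Hmstar |].
  destruct Hmstar as [Hsol _].
  pose proof (mstar_sol_lt_1 p _ _ _ ltac:(lia) HL Hsol) as Hm1.
  destruct Hsol as [[Hm0 _] Heq].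
  rewrite m_lam_le_iff by (lia || lra || exact Heq).
  pose proof (succ_ratio_pos_lt_1 (INR j) ltac:(apply lt_0_INR; lia)).
  rewrite pow2_sqrt by lra. apply succ_ratio_le; [lra |].
  apply le_INR in Hpk. rewrite !S_INR in Hpk. lra.
Qed.

End Lambda2.

Theorem lemmaB3 (p k : nat) (hp : (3 <= p)%nat) (hk : (1 <= k)%nat) :
  is_glb (lambda2_set p k) (lambda1 p k) <-> (p <= k)%nat.
Proof.
  split.
  - intros [_ Hgreatest].
    destruct (Nat.le_gt_cases p k) as [Hpk | Hkp]; [exact Hpk | exfalso].
    destruct (lambda2_set_gap p hp k hk Hkp) as [z [Hz Hlow]].
    pose proof (Hgreatest z Hlow). lra.
  - intro Hpk.
    apply is_glb_of_min.
    + apply lambda1_mem_lambda2_set; lia.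
    + intros y [Hy _]. exact Hy.
Qed.
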